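(* For every $\varepsilon>0$ there exists a simple bipartite cubic graph $G$ such that every traveling salesman tour of $G$ has length at least $(1.2-\varepsilon)\,|V(G)|$.
   Context: A traveling salesman tour (TSP tour) of a graph $G$ is a closed walk in $G$ that visits every vertex of $G$; its length is the number of edges traversed, counted with multiplicity. *)

From HB Require Import structures.
From mathcomp Require Import all_boot all_order all_algebra.
From mathcomp Require Import reals.
Set Implicit Arguments. Unset Strict Implicit. Unset Printing Implicit Defensive.

Definition simple_graph (T : finType) (e : rel T) : Prop :=
  symmetric e /\ irreflexive e.

Definition cubic (T : finType) (e : rel T) : Prop :=
  forall x : T, #|[pred y | e x y]| = 3.

Definition bipartite (T : finType) (e : rel T) : Prop :=
  exists c : T -> bool, forall x y, e x y -> c x != c y.

Definition connected_graph (T : finType) (e : rel T) : Prop :=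
  forall x y : T, connect e x y.

(* A closed walk starting and ending at x, given as x :: p with consecutive
   vertices adjacent; its length is size p (edges counted with multiplicity). *)
Definition tsp_tour (T : finType) (e : rel T) (x : T) (p : seq T) : Prop :=
  path e x p /\ last x p = x /\ (forall v : T, v \in x :: p).

From HB Require Import structures.
From mathcomp Require Import all_boot all_order all_algebra.
From mathcomp Require Import reals.
From mathcomp Require Import zify lra.
Set Implicit Arguments. Unset Strict Implicit. Unset Printing Implicit Defensive.

(* The graph consists of two copies of a gadget G_k joined by two edges. G_0 is K_{3,3} minus
   an edge, and G_{k+1} is built from two copies of G_k and a path on four new vertices; every
   gadget has two terminals of degree 2, so the graph is cubic, and it is bipartite, connected
   and has 20 * 2^k - 8 vertices.
   A tour is a closed walk: it crosses every edge cut an even number of times, at least twice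
   when the cut separates two vertices, and it visits a vertex half as often as it traverses the
   edges at that vertex. Applied to a few cuts of a gadget G_k sitting inside any graph, these
   constraints show by induction on k that the tour visits G_k at least 12 * 2^k - 6 times, and
   once more if one of the two edges leaving G_k is unused. Summing over both copies, a tour has
   length at least 24 * 2^k - 12, that is 6/5 of the number of vertices up to an additive 12/5. *)

Fixpoint gadget (k : nat) : finType :=
  if k is k'.+1 then ('I_4 + (gadget k' + gadget k'))%type else 'I_6.

Definition term_u k : gadget k :=
  match k with 0 => (inZp 0 : 'I_6) | _.+1 => inl (inZp 0 : 'I_4) end.
Definition term_v k : gadget k :=
  match k with 0 => (inZp 1 : 'I_6) | _.+1 => inl (inZp 1 : 'I_4) end.

(* On 'I_6 with n = 1 this is K_{3,3} minus the edge 01, i.e. G_0 with terminals 0 and 1; on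
   'I_4 with n = 5 it is the path 3 - 0 - 1 - 2 formed by the new vertices of G_{k+1}, whose
   terminals are 0 and 1 and whose vertices 2 and 3 are attached to the u-, resp. v-terminals of
   both copies of G_k. *)
Definition parity_adj (n i j : nat) := (odd i != odd j) && (i + j != n).

Definition attach k (i : 'I_4) (w : gadget k) :=
  ((i == 2 :> nat) && (w == term_u k)) || ((i == 3 :> nat) && (w == term_v k)).

Fixpoint gadget_adj k : rel (gadget k) :=
  match k return rel (gadget k) with
  | 0 => fun i j => parity_adj 1 i j
  | k'.+1 => fun x y =>
    match x, y with
    | inl i, inl j => parity_adj 5 i j
    | inl i, inr (inl w) | inl i, inr (inr w)
    | inr (inl w), inl i | inr (inr w), inl i => attach i w
    | inr (inl w), inr (inl w') | inr (inr w), inr (inr w') => gadget_adj w w'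
    | _, _ => false
    end
  end.

Arguments gadget_adj {k}.

Definition copy k (b : bool) (w : gadget k) : gadget k.+1 := inr (if b then inl w else inr w).

Lemma attachP k i (w : gadget k) :
  attach i w -> (i = inZp 2 /\ w = term_u k) \/ (i = inZp 3 /\ w = term_v k).
Proof. by case/orP=> /andP[/eqP i_val /eqP->]; [left | right]; split=> //; apply: val_inj. Qed.

Lemma gadget_adj_copy k b (w : gadget k) y :
  gadget_adj (copy b w) y -> (exists w', y = copy b w') \/ (exists2 i, y = inl i & attach i w).
Proof. case: b y => -[i|[w'|w']] //= adj; by [right; exists i | left; exists w']. Qed.

Definition bridge k (w w' : gadget k) :=
  ((w == term_u k) && (w' == term_v k)) || ((w == term_v k) && (w' == term_u k)).

Definition gadget_pair k : finType := (gadget k + gadget k)%type.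

Definition pair_adj k : rel (gadget_pair k) := fun x y =>
  match x, y with
  | inl w, inl w' | inr w, inr w' => gadget_adj w w'
  | inl w, inr w' | inr w, inl w' => bridge w w'
  end.

Lemma term_u_neq_v k : term_u k != term_v k.
Proof. by case: k. Qed.

Lemma card_gadget k : #|gadget k| + 4 = 10 * 2 ^ k.
Proof.
elim: k => [|k IHk]; first by rewrite card_ord.
by rewrite [gadget _]/= !card_sum card_ord expnS; lia.
Qed.

Lemma parity_adj_sym n : symmetric (parity_adj n).
Proof. by move=> i j; rewrite /parity_adj addnC eq_sym. Qed.

Lemma gadget_adj_sym k : symmetric (@gadget_adj k).
Proof.
elim: k => [|k IHk] => [i j|[i|[w|w]] [j|[w'|w']]] //=.
all: by [apply: parity_adj_sym | apply: IHk].
Qed.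

Lemma gadget_adj_irr k : irreflexive (@gadget_adj k).
Proof. by elim: k => [|k IHk] => [i|[i|[w|w]]] //=; rewrite /parity_adj eqxx. Qed.

Lemma sum_andb_eq (U : finType) (b : bool) (a : U) : \sum_(y : U) (b && (y == a) : nat) = b.
Proof.
case: b; last by rewrite big1.
by rewrite (bigD1 a) //= eqxx big1 // => y /negbTE ->.
Qed.

Lemma attach_nat k (i : 'I_4) (w : gadget k) :
  attach i w = ((i == 2 :> nat) && (w == term_u k)) + ((i == 3 :> nat) && (w == term_v k)) :> nat.
Proof. by rewrite /attach; case: i => [[|[|[|[|i]]]] ?] //=; case: (_ == _). Qed.

Lemma sum_attach_l k (i : 'I_4) :
  \sum_(w : gadget k) (attach i w : nat) = ((i == 2 :> nat) + (i == 3 :> nat))%N.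
Proof. by under eq_bigr do rewrite attach_nat; rewrite big_split /= !sum_andb_eq. Qed.

Lemma sum_attach_r k (w : gadget k) :
  \sum_(i < 4) (attach i w : nat) = ((w == term_u k) + (w == term_v k))%N.
Proof. by rewrite !big_ord_recl big_ord0 /attach /= orbF !add0n addn0. Qed.

Lemma gadget_degree k (x : gadget k) :
  (\sum_y (gadget_adj x y : nat) + (x == term_u k) + (x == term_v k))%N = 3.
Proof.
elim: k x => [|k IHk]; first by case=> [[|[|[|[|[|[|i]]]]]] ?] //; rewrite !big_ord_recl big_ord0.
have tuv := term_u_neq_v k.
case=> [i|[w|w]]; rewrite !big_sumType /= -/(gadget k).
- rewrite !sum_attach_l !big_ord_recl big_ord0.
  by case: i => [[|[|[|[|i]]]] ?].
- rewrite sum_attach_r [X in _ + (_ + X)]big1 //; have := IHk w.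
  by case: (w =P term_u k) => [->|]; rewrite ?(negbTE tuv) /=; lia.
- rewrite sum_attach_r [X in _ + (X + _)]big1 //; have := IHk w.
  by case: (w =P term_u k) => [->|]; rewrite ?(negbTE tuv) /=; lia.
Qed.

Lemma sum_bridge k (w : gadget k) :
  \sum_(w' : gadget k) (bridge w w' : nat) = ((w == term_u k) + (w == term_v k))%N.
Proof.
have tuv := term_u_neq_v k.
rewrite (eq_bigr (fun w' => ((w == term_u k) && (w' == term_v k)) +
                            ((w == term_v k) && (w' == term_u k)))%N).
  by rewrite big_split /= !sum_andb_eq.
move=> w' _; rewrite /bridge.
by case: (w =P term_u k) => [->|_]; rewrite ?eqxx ?(negbTE tuv) /=; case: (_ == _).
Qed.

Lemma pair_adj_sym k : symmetric (@pair_adj k).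
Proof.
move=> [w|w] [w'|w'] /=; try exact: gadget_adj_sym.
all: by rewrite /bridge orbC andbC [X in _ || X]andbC.
Qed.

Lemma pair_adj_irr k : irreflexive (@pair_adj k).
Proof. by move=> [w|w] /=; rewrite gadget_adj_irr. Qed.

Lemma pair_adj_cubic k : cubic (@pair_adj k).
Proof.
move=> x; have -> : #|[pred y | pair_adj x y]| = \sum_y (pair_adj x y : nat).
  by rewrite -sum1_card big_mkcond.
by rewrite big_sumType; case: x => w /=; rewrite sum_bridge -(gadget_degree w); lia.
Qed.

Fixpoint gadget_color k : gadget k -> bool :=
  match k return gadget k -> bool with
  | 0 => fun i => odd i
  | k'.+1 => fun x =>
    match x with
    | inl i => odd i
    | inr (inl w) | inr (inr w) => ~~ gadget_color w
    end
  end.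

Lemma gadget_color_term_u k : gadget_color (term_u k) = false. Proof. by case: k. Qed.
Lemma gadget_color_term_v k : gadget_color (term_v k) = true. Proof. by case: k. Qed.

Lemma gadget_color_adj k (x y : gadget k) : gadget_adj x y -> gadget_color x != gadget_color y.
Proof.
elim: k x y => [|k IHk]; first by move=> i j /andP[].
have attach_color (i : 'I_4) (w : gadget k) : attach i w -> gadget_color w = odd i.
  by case/orP=> /andP[/eqP-> /eqP->]; rewrite ?gadget_color_term_u ?gadget_color_term_v.
move=> [i|[w|w]] [j|[w'|w']] //= => [/andP[] // | adj | adj | adj | adj | adj | adj].
all: try by rewrite (inj_eq negb_inj); apply: IHk.
all: by rewrite (attach_color _ _ adj); case: odd.
Qed.

Lemma pair_adj_bipartite k : bipartite (@pair_adj k).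
Proof.
exists (fun x => match x with inl w | inr w => gadget_color w end).
move=> [w|w] [w'|w'] /=; try exact: gadget_color_adj.
all: by case/orP=> /andP[/eqP-> /eqP->]; rewrite gadget_color_term_u gadget_color_term_v.
Qed.

Lemma homo_connect (T T' : finType) (e : rel T) (e' : rel T') (f : T -> T') :
  {homo f : x y / e x y >-> e' x y} -> {homo f : x y / connect e x y >-> connect e' x y}.
Proof.
move=> hf x y /connectP[p /(homo_path hf) pf ->].
by apply/connectP; exists (map f p); rewrite ?last_map.
Qed.

Lemma gadget_connect k (x : gadget k) : connect gadget_adj (term_u k) x.
Proof.
elim: k x => [|k IHk].
  have base_path : path (@gadget_adj 0) (term_u 0)
    [seq inZp i | i <- [:: 5; 4; 3; 2; 1]] by [].
  by move=> i; apply: (path_connect base_path); case: i => [[|[|[|[|[|[|]]]]]] ?].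
have top_path : path (@gadget_adj k.+1) (term_u k.+1)
  [seq inl (inZp i) | i <- [:: 3; 0; 1; 2]] by [].
have to_2 : connect (@gadget_adj k.+1) (term_u k.+1) (inl (inZp 2)).
  by apply: (path_connect top_path); rewrite !inE eqxx !orbT.
case=> [i|[w|w]].
- by apply: (path_connect top_path); case: i => [[|[|[|[|]]]] ?].
- apply: (connect_trans to_2 (connect_trans (y := copy true (term_u k)) _ _)).
    by apply: connect1; rewrite /= /attach eqxx.
  exact: (homo_connect (f := copy true) _ (IHk w)).
- apply: (connect_trans to_2 (connect_trans (y := copy false (term_u k)) _ _)).
    by apply: connect1; rewrite /= /attach eqxx.
  exact: (homo_connect (f := copy false) _ (IHk w)).
Qed.

Lemma pair_adj_connected k : connected_graph (@pair_adj k).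
Proof.
have hsym : connect_sym (@pair_adj k) by apply/sym_connect_sym/pair_adj_sym.
have from_u x : connect (@pair_adj k) (inl (term_u k)) x.
  case: x => w; first exact: (homo_connect _ (gadget_connect w)).
  apply: connect_trans (homo_connect _ (gadget_connect w)) => //.
  apply: connect_trans (homo_connect _ (gadget_connect (term_v k))) (connect1 _) => //=.
  by rewrite /bridge !eqxx orbT.
by move=> x y; apply: connect_trans (from_u y); rewrite hsym.
Qed.

Section ClosedWalks.
Variable T : eqType.
Implicit Types (x y u v : T) (p : seq T) (S : pred T) (a b : T * T).

Definition steps x p : seq (T * T) := zip (x :: p) p.

Definition same_edge a b := (b == a) || (b == (a.2, a.1)).

Definition traversals x p a := count (same_edge a) (steps x p).

Definition visits p y := count_mem y p.

Definition crossings x p S := count (fun st : T * T => S st.1 != S st.2) (steps x p).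

Lemma same_edge_sym : symmetric same_edge.
Proof.
move=> [a1 a2] [b1 b2]; rewrite /same_edge /= !xpair_eqE.
by rewrite ![b1 == _]eq_sym ![b2 == _]eq_sym [(a2 == b1) && _]andbC.
Qed.

Lemma same_edge_swap y z : same_edge (y, z) =1 same_edge (z, y).
Proof. by move=> [a1 a2]; rewrite /same_edge !xpair_eqE orbC. Qed.

Lemma same_edge_trans a b c : same_edge a c -> same_edge b c -> same_edge a b.
Proof.
case: a b c => [a1 a2] [b1 b2] [c1 c2]; rewrite /same_edge /= !xpair_eqE.
by do 2!case/orP=> /andP[/eqP-> /eqP->]; rewrite !eqxx ?orbT.
Qed.

Lemma mem_steps_path (e : rel T) x p a : path e x p -> a \in steps x p -> e a.1 a.2.
Proof.
elim: p x => [|y p IHp] x //= /andP[exy pyp].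
by rewrite inE => /orP[/eqP-> | /IHp]; last exact.
Qed.

Lemma map_fst_steps x p : map fst (steps x p) = belast x p.
Proof. by elim: p x => [|y p IHp] x //=; rewrite IHp. Qed.

Lemma map_snd_steps x p : map snd (steps x p) = p.
Proof. by elim: p x => [|y p IHp] x //=; rewrite IHp. Qed.

Lemma count_mem_belast x p y : last x p = x -> count_mem y (belast x p) = count_mem y p.
Proof.
move=> closed; have := congr1 (count_mem y) (lastI x p).
by rewrite -cats1 count_cat closed /= addn0 [in RHS]addnC => /addnI.
Qed.

Lemma crossings_odd x p S : odd (crossings x p S) = (S x != S (last x p)).
Proof.
rewrite /crossings /steps; elim: p x => [|y p IHp] x /=; first by case: (S x).
by rewrite oddD IHp; case: (S x); case: (S y); case: (S (last y p)).
Qed.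

Lemma crossings_gt0 x p S u : u \in x :: p -> S u != S x -> 0 < crossings x p S.
Proof.
rewrite /crossings /steps; elim: p x => [|y p IHp] x /=; first by rewrite inE => /eqP->; rewrite eqxx.
case: (S x =P S y) => [Sxy | //]; rewrite inE => /orP[/eqP-> | ap]; first by rewrite eqxx.
by rewrite Sxy; exact: IHp.
Qed.

Lemma crossings_ge2 x p S u v : last x p = x -> u \in x :: p -> v \in x :: p ->
  S u -> ~~ S v -> 1 < crossings x p S.
Proof.
move=> closed up vp Su Sv.
have even : ~~ odd (crossings x p S) by rewrite crossings_odd closed eqxx.
have pos : 0 < crossings x p S.
  by case Sx: (S x); [apply: (crossings_gt0 vp) | apply: (crossings_gt0 up)]; rewrite Sx ?Su ?(negbTE Sv).
by move: even pos; case: (crossings x p S) => [|[]].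
Qed.

Lemma crossings_pred1 (e : rel T) x p y : irreflexive e -> path e x p -> last x p = x ->
  crossings x p (pred1 y) = (visits p y).*2.
Proof.
move=> irr walk closed; rewrite /crossings.
have loop_free a : a \in steps x p -> ~~ ((a.1 == y) && (a.2 == y)).
  by case: a => a1 a2 /(mem_steps_path walk) /=; apply: contraL => /andP[/eqP-> /eqP->]; rewrite irr.
set at1 := fun a : T * T => a.1 == y; set at2 := fun a : T * T => a.2 == y.
have no_loop : count (predI at1 at2) (steps x p) = 0.
  by apply/eqP; rewrite -leqn0 leqNgt -has_count; apply/hasPn.
rewrite (eq_in_count (a2 := predU at1 at2)); last first.
  by move=> [a1 a2] /loop_free; rewrite /at1 /at2 /=; case: (a1 == y); case: (a2 == y).
rewrite -[LHS]addn0 -no_loop count_predUI.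
rewrite /at1 /at2 -(count_map fst (pred1 y)) -(count_map snd (pred1 y)).
by rewrite map_fst_steps map_snd_steps count_mem_belast // addnn.
Qed.

Definition distinct_edges (es : seq (T * T)) := pairwise (fun a b => ~~ same_edge a b) es.

Definition edge_cut (e : rel T) S (es : seq (T * T)) :=
  forall y z, e y z -> (S y != S z) = has (same_edge (y, z)) es.

Lemma count_has_distinct (s es : seq (T * T)) : distinct_edges es ->
  count (fun a => has (same_edge a) es) s = \sum_(b <- es) count (same_edge b) s.
Proof.
elim: es => [|b es IHes] /=; first by rewrite big_nil; elim: s.
case/andP=> b_new es_dist; rewrite big_cons -IHes //.
rewrite (eq_count (a2 := predU (same_edge b) (fun a => has (same_edge a) es))); last first.
  by move=> a /=; rewrite same_edge_sym.
rewrite -count_predUI.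
rewrite [count (predI _ _) _](eq_count (a2 := pred0)) ?count_pred0 ?addn0 // => a /=.
apply/negbTE/andP => -[ba /hasP[c ces]]; rewrite same_edge_sym => ca.
by move/allP: b_new => /(_ c ces); rewrite (same_edge_trans ba ca).
Qed.

Lemma crossings_cut (e : rel T) x p S es : path e x p -> distinct_edges es ->
  edge_cut e S es -> crossings x p S = \sum_(a <- es) traversals x p a.
Proof.
move=> walk dist cut; rewrite /crossings -count_has_distinct //.
by apply: eq_in_count => -[y z] /(mem_steps_path walk); apply: cut.
Qed.

Lemma edge_cut_filter (e : rel T) S es :
  (forall y z, e y z -> S y != S z -> has (same_edge (y, z)) es) ->
  edge_cut e S [seq a <- es | S a.1 != S a.2].
Proof.
move=> cover y z eyz.
have cross_same a : same_edge (y, z) a -> (S a.1 != S a.2) = (S y != S z).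
  case: a => a1 a2; rewrite /same_edge !xpair_eqE.
  by case/orP=> /andP[/eqP-> /eqP->] //=; rewrite eq_sym.
apply/idP/hasP => [cross | [a]].
  case/hasP: (cover y z eyz cross) => a aes ya.
  by exists a; rewrite // mem_filter cross_same ?cross.
by rewrite mem_filter => /andP[cross_a _] ya; rewrite -(cross_same a ya).
Qed.

End ClosedWalks.

Lemma sum_visits (T : finType) (p : seq T) : \sum_(y : T) visits p y = size p.
Proof.
rewrite /visits; elim: p => [|x p IHp] /=; first by rewrite big1.
rewrite big_split /= IHp (bigD1 x) //= eqxx big1 ?add1n // => y.
by rewrite eq_sym => /negbTE->.
Qed.

Lemma mem_closed_walk (T : eqType) (x : T) p : last x p = x -> p != [::] -> {subset x :: p <= p}.
Proof.
case: p => // y p closed _ z; rewrite inE => /predU1P[-> | //].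
by rewrite -closed /= mem_last.
Qed.

Record gadget_embedding (T : finType) (e : rel T) (k : nat) := GadgetEmbedding {
  emb :> gadget k -> T;
  port_u : T;
  port_v : T;
  emb_inj : injective emb;
  emb_adj : forall w w', e (emb w) (emb w') = gadget_adj w w';
  emb_adj_out : forall w z, e (emb w) z ->
    (exists w', z = emb w') \/ (w = term_u k /\ z = port_u) \/ (w = term_v k /\ z = port_v);
  port_u_out : forall w, emb w != port_u;
  port_v_out : forall w, emb w != port_v }.

Section EmbeddedCut.
Variables (T : finType) (e : rel T) (k : nat) (E : gadget_embedding e k).
Local Notation tu := (term_u k).
Local Notation tv := (term_v k).
Implicit Types (P : pred (gadget k)) (es : seq (gadget k * gadget k)).

Definition emb_set P : pred T := [pred z | [exists w, (z == E w) && P w]].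

Definition emb_edges es : seq (T * T) := [seq (E a.1, E a.2) | a <- es].

Definition port_edges P : seq (T * T) :=
  (if P tu then [:: (E tu, port_u E)] else [::]) ++
  (if P tv then [:: (E tv, port_v E)] else [::]).

Lemma emb_setE P w : emb_set P (E w) = P w.
Proof.
apply/existsP/idP => [[w' /andP[/eqP/(@emb_inj _ _ _ E)-> //]] | Pw].
by exists w; rewrite eqxx.
Qed.

Lemma emb_set_pred1 w z : emb_set (pred1 w) z = (z == E w).
Proof.
apply/existsP/eqP => [[w' /andP[/eqP-> /eqP->]] // | ->].
by exists w; rewrite /= !eqxx.
Qed.

Lemma emb_set_out P z : (forall w, E w != z) -> emb_set P z = false.
Proof. by move=> z_out; apply/existsP => -[w /andP[/eqP zw _]]; case/eqP: (z_out w). Qed.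

Lemma same_edge_emb (a b : gadget k * gadget k) :
  same_edge (E a.1, E a.2) (E b.1, E b.2) = same_edge a b.
Proof. by rewrite /same_edge /= !xpair_eqE !(inj_eq (@emb_inj _ _ _ E)). Qed.

Lemma has_emb_edges es w w' :
  has (same_edge (E w, E w')) (emb_edges es) = has (same_edge (w, w')) es.
Proof. by rewrite has_map; apply: eq_has => a; rewrite /= (same_edge_emb (w, w')). Qed.

Lemma has_emb_edges_out es y z : (forall w, E w != z) ->
  has (same_edge (y, z)) (emb_edges es) = false.
Proof.
move=> z_out; rewrite has_map; apply/hasPn => -[a1 a2] _.
by rewrite /same_edge /= !xpair_eqE !(negbTE (z_out _)) andbF.
Qed.

Lemma has_port_edges_out P y z : (forall w, E w != y) -> (forall w, E w != z) ->
  has (same_edge (y, z)) (port_edges P) = false.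
Proof.
move=> y_out z_out; rewrite /port_edges.
by case: (P tu); case: (P tv); rewrite //= /same_edge !xpair_eqE
  ?(negbTE (y_out _)) ?(negbTE (z_out _)).
Qed.

Lemma has_port_edges_in P w w' : has (same_edge (E w, E w')) (port_edges P) = false.
Proof.
rewrite /port_edges; case: (P tu); case: (P tv);
  by rewrite //= /same_edge /= !xpair_eqE ?[port_u E == _]eq_sym ?[port_v E == _]eq_sym
    ?(negbTE (port_u_out _ _)) ?(negbTE (port_v_out _ _)) ?andbF.
Qed.

Lemma emb_term_neq : (E tu == E tv) = false.
Proof. by rewrite (inj_eq (@emb_inj _ _ _ E)) (negbTE (term_u_neq_v k)). Qed.

Lemma has_port_edges_u P : has (same_edge (E tu, port_u E)) (port_edges P) = P tu.
Proof.
rewrite /port_edges; case: (P tu); case: (P tv); rewrite //= /same_edge !xpair_eqE ?eqxx //=;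
  by rewrite eq_sym emb_term_neq (negbTE (port_u_out _ _)) ?andbF.
Qed.

Lemma has_port_edges_v P : has (same_edge (E tv, port_v E)) (port_edges P) = P tv.
Proof.
rewrite /port_edges; case: (P tu); case: (P tv); rewrite //= /same_edge !xpair_eqE ?eqxx ?orbT //=;
  by rewrite emb_term_neq (negbTE (port_v_out _ _)) ?andbF.
Qed.

Hypothesis e_sym : symmetric e.

Lemma emb_edge_cut P es : edge_cut gadget_adj P es ->
  edge_cut e (emb_set P) (emb_edges es ++ port_edges P).
Proof.
move=> cut y z; wlog [w ->] : y z / exists w, y = E w.
  move=> in_image; case: (pickP (fun w => E w == y)) => [w /eqP<- | y_out].
    by apply: in_image; exists w.
  case: (pickP (fun w => E w == z)) => [w /eqP<- | z_out] eyz.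
    rewrite eq_sym (eq_has (same_edge_swap y (E w))) in_image //; last by rewrite e_sym.
    by exists w.
  have y_out' w : E w != y by apply/negbT/y_out.
  have z_out' w : E w != z by apply/negbT/z_out.
  by rewrite !emb_set_out // has_cat has_emb_edges_out // has_port_edges_out.
move=> eyz; case: (emb_adj_out eyz) => [[w' z_def] | [[-> ->] | [-> ->]]].
- rewrite z_def !emb_setE has_cat has_emb_edges has_port_edges_in orbF; apply: cut.
  by rewrite -(emb_adj E) -z_def.
- have u_out := port_u_out E.
  by rewrite emb_setE emb_set_out // has_cat has_emb_edges_out // has_port_edges_u; case: (P tu).
- have v_out := port_v_out E.
  by rewrite emb_setE emb_set_out // has_cat has_emb_edges_out // has_port_edges_v; case: (P tv).
Qed.

Lemma port_edges_out P b w : b \in port_edges P -> E w != b.2.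
Proof.
rewrite /port_edges mem_cat; case: (P tu); case: (P tv); rewrite ?inE ?orbF //=;
  by do ?case/orP; move/eqP=> -> /=; rewrite ?port_u_out ?port_v_out.
Qed.

Lemma emb_distinct_edges P es : distinct_edges es ->
  distinct_edges (emb_edges es ++ port_edges P).
Proof.
have u_out := port_u_out E; have v_out := port_v_out E.
move=> dist; rewrite /distinct_edges pairwise_cat; apply/and3P; split.
- apply/allrelP => _ [b1 b2] /mapP[[a1 a2] _ ->] /port_edges_out /= b_out.
  by rewrite /same_edge /= !xpair_eqE ![b2 == _]eq_sym !(negbTE (b_out _)) !andbF.
- by rewrite /emb_edges pairwise_map; apply: sub_pairwise dist => a b; rewrite /= same_edge_emb.
- rewrite /port_edges; case: (P tu); case: (P tv) => //=.
  by rewrite /same_edge /= !xpair_eqE eq_sym emb_term_neq (negbTE (u_out _)) andbT.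
Qed.

Definition port_u_uses x p := traversals x p (E tu, port_u E).
Definition port_v_uses x p := traversals x p (E tv, port_v E).

Lemma crossings_emb_set x p P es : path e x p -> distinct_edges es ->
  edge_cut gadget_adj P es ->
  crossings x p (emb_set P) = \sum_(a <- es) traversals x p (E a.1, E a.2)
    + (if P tu then port_u_uses x p else 0) + (if P tv then port_v_uses x p else 0).
Proof.
move=> walk dist cut.
rewrite (crossings_cut walk (emb_distinct_edges P dist) (emb_edge_cut cut)).
rewrite big_cat big_map -addnA /port_edges big_cat.
by case: (P tu); case: (P tv); rewrite /= ?big_cons ?big_nil ?addn0.
Qed.

End EmbeddedCut.

Definition base_edges : seq ('I_6 * 'I_6) :=
  [seq (inZp a.1, inZp a.2) | a <- [:: (0, 3); (0, 5); (1, 2); (1, 4); (3, 2); (3, 4); (5, 2); (5, 4)]].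

Lemma base_edges_distinct : distinct_edges base_edges.
Proof. by []. Qed.

Lemma base_edges_cover (y z : gadget 0) : gadget_adj y z -> has (same_edge (y, z)) base_edges.
Proof. by case: y => [[|[|[|[|[|[|y]]]]]] ?] //; case: z => [[|[|[|[|[|[|z]]]]]] ?]. Qed.

Definition top_edges k : seq (gadget k.+1 * gadget k.+1) :=
  [:: (inl (inZp 0), inl (inZp 1)); (inl (inZp 0), inl (inZp 3)); (inl (inZp 1), inl (inZp 2));
      (copy true (term_u k), inl (inZp 2)); (copy false (term_u k), inl (inZp 2));
      (copy true (term_v k), inl (inZp 3)); (copy false (term_v k), inl (inZp 3))].

Lemma top_edges_distinct k : distinct_edges (top_edges k).
Proof. by rewrite /distinct_edges /= /same_edge /= !xpair_eqE /= ?andbF. Qed.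

Lemma top_edges_top k (i j : 'I_4) :
  parity_adj 5 i j -> has (same_edge (inl i, inl j)) (top_edges k).
Proof. by case: i => [[|[|[|[|i]]]] ?] //; case: j => [[|[|[|[|j]]]] ?]. Qed.

Lemma top_edges_attach k b (i : 'I_4) (w : gadget k) :
  attach i w -> has (same_edge (copy b w, inl i)) (top_edges k).
Proof. by case/attachP=> -[-> ->]; case: b; rewrite /same_edge /= !xpair_eqE /= !eqxx ?orbT. Qed.

Lemma top_edges_cover k (P : pred (gadget k.+1)) :
  (forall b w w', P (copy b w) = P (copy b w')) ->
  forall y z, gadget_adj y z -> P y != P z -> has (same_edge (y, z)) (top_edges k).
Proof.
move=> Pcopy [i|[w|w]] [j|[w'|w']] // adj.
- by move=> _; apply: top_edges_top.
- by move=> _; rewrite (eq_has (same_edge_swap _ _)); apply: (top_edges_attach true).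
- by move=> _; rewrite (eq_has (same_edge_swap _ _)); apply: (top_edges_attach false).
- by move=> _; apply: (top_edges_attach true).
- by rewrite (Pcopy true w w') eqxx.
- by move=> _; apply: (top_edges_attach false).
- by rewrite (Pcopy false w w') eqxx.
Qed.

Section SubGadget.
Variables (T : finType) (e : rel T) (k : nat) (E : gadget_embedding e k.+1) (b : bool).

Let sub_emb (w : gadget k) := E (copy b w).

Lemma sub_emb_inj : injective sub_emb.
Proof. by move=> w w' /(@emb_inj _ _ _ E); case: b => -[]. Qed.

Lemma sub_emb_adj w w' : e (sub_emb w) (sub_emb w') = gadget_adj w w'.
Proof. by rewrite /sub_emb emb_adj; case: b. Qed.

Lemma sub_emb_adj_out w z : e (sub_emb w) z ->
  (exists w', z = sub_emb w') \/ (w = term_u k /\ z = E (inl (inZp 2))) \/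
  (w = term_v k /\ z = E (inl (inZp 3))).
Proof.
move=> ez; case: (emb_adj_out ez) => [[y z_def] | [[]|[]]]; [| by case: b ..].
move: ez; rewrite z_def emb_adj => /gadget_adj_copy[[w' ->] | [i -> /attachP[[-> ->]|[-> ->]]]].
- by left; exists w'.
- by right; left.
- by right; right.
Qed.

Lemma sub_port_u_out w : sub_emb w != E (inl (inZp 2)).
Proof. by rewrite (inj_eq (@emb_inj _ _ _ E)); case: b. Qed.

Lemma sub_port_v_out w : sub_emb w != E (inl (inZp 3)).
Proof. by rewrite (inj_eq (@emb_inj _ _ _ E)); case: b. Qed.

Definition sub_embedding : gadget_embedding e k :=
  GadgetEmbedding sub_emb_inj sub_emb_adj sub_emb_adj_out sub_port_u_out sub_port_v_out.

End SubGadget.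

Lemma gadget_base_arith (vu vv su sv mu mv : nat) :
  vu.*2 = su + mu -> 1 < su + mv -> vv.*2 = sv + mv -> 1 < sv + mu ->
  1 < mu + mv -> 0 < vu -> 0 < vv -> 2 + ((mu == 0) || (mv == 0)) <= vu + vv.
Proof. by case: eqP => [->|_]; case: eqP => [->|_] /=; lia. Qed.

(* vu, vv, va, vb count visits to the top vertices 0, 1, 2, 3 of G_{k+1}; al, be, ga count
   traversals of the top edges 01, 03, 12; d_i, e_i those of the edges from 2, 3 to the i-th copy,
   and X_i the visits to the i-th copy. *)
Lemma gadget_step_arith (n vu vv va vb al be ga mu mv d1 e1 d2 e2 X1 X2 : nat) :
  vu.*2 = al + be + mu -> vv.*2 = al + ga + mv -> va.*2 = ga + d1 + d2 -> vb.*2 = be + e1 + e2 ->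
  0 < vu -> 0 < vv -> 1 < be + ga -> 1 < al + ga + mu -> 1 < al + be + mv -> 1 < mu + mv ->
  1 < d1 + e1 -> 1 < d2 + e2 ->
  n + ((d1 == 0) || (e1 == 0)) <= X1 + 6 -> n + ((d2 == 0) || (e2 == 0)) <= X2 + 6 ->
  n.*2 + ((mu == 0) || (mv == 0)) <= vu + vv + va + vb + X1 + X2 + 6.
Proof.
case: (mu =P 0) (mv =P 0) (d1 =P 0) (e1 =P 0) (d2 =P 0) (e2 =P 0)
  => [->|?] [->|?] [->|?] [->|?] [->|?] [->|?] /=; lia.
Qed.

Lemma sum_gadgetS k (F : gadget k.+1 -> nat) :
  \sum_y F y = \sum_(i < 4) F (inl i) + \sum_w F (copy true w) + \sum_w F (copy false w).
Proof. by rewrite !big_sumType /= addnA. Qed.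

Lemma big_ord_inZp n (F : 'I_n.+1 -> nat) : \sum_(i < n.+1) F i = \sum_(0 <= j < n.+1) F (inZp j).
Proof. by rewrite big_mkord; apply: eq_bigr => i _; rewrite valZpK. Qed.

Section GadgetInTour.
Variables (T : finType) (e : rel T) (x : T) (p : seq T).
Hypotheses (e_sym : symmetric e) (e_irr : irreflexive e) (tour : tsp_tour e x p).
Hypothesis p_nonempty : p != [::].

Let walk : path e x p := proj1 tour.
Let closed : last x p = x := proj1 (proj2 tour).
Let covers v : v \in x :: p := proj2 (proj2 tour) v.

Lemma visits_gt0 v : 0 < visits p v.
Proof. by rewrite /visits -has_count has_pred1 (mem_closed_walk closed p_nonempty). Qed.

Lemma visits_emb k (E : gadget_embedding e k) w :
  (visits p (E w)).*2 = crossings x p (emb_set E (pred1 w)).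
Proof.
rewrite -(crossings_pred1 _ e_irr walk closed); apply: eq_count => a /=.
by rewrite !(emb_set_pred1 E).
Qed.

Lemma emb_crossings_ge2 k (E : gadget_embedding e k) (P : pred (gadget k)) w :
  P w -> 1 < crossings x p (emb_set E P).
Proof.
move=> Pw; apply: (crossings_ge2 closed (covers (E w)) (covers (port_u E))).
  by rewrite emb_setE.
by rewrite emb_set_out // => w'; apply: port_u_out.
Qed.

Lemma port_uses_ge2 k (E : gadget_embedding e k) : 1 < port_u_uses E x p + port_v_uses E x p.
Proof.
have := emb_crossings_ge2 E (P := predT) (w := term_u k) isT.
by rewrite (crossings_emb_set E e_sym walk (es := [::])) // big_nil.
Qed.

Lemma crossings_base (E : gadget_embedding e 0) (P : pred (gadget 0)) :
  crossings x p (emb_set E P) =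
    \sum_(a <- base_edges | P a.1 != P a.2) traversals x p (E a.1, E a.2)
    + (if P (term_u 0) then port_u_uses E x p else 0)
    + (if P (term_v 0) then port_v_uses E x p else 0).
Proof.
have dist := pairwise_filter (fun a => P a.1 != P a.2) base_edges_distinct.
rewrite (crossings_emb_set E e_sym walk dist) ?big_filter //.
by apply: edge_cut_filter => y z /base_edges_cover.
Qed.

Lemma crossings_top k (E : gadget_embedding e k.+1) (P : pred (gadget k.+1)) :
  (forall b w w', P (copy b w) = P (copy b w')) ->
  crossings x p (emb_set E P) =
    \sum_(a <- top_edges k | P a.1 != P a.2) traversals x p (E a.1, E a.2)
    + (if P (term_u k.+1) then port_u_uses E x p else 0)
    + (if P (term_v k.+1) then port_v_uses E x p else 0).
Proof.
move=> Pcopy; have dist := pairwise_filter (fun a => P a.1 != P a.2) (top_edges_distinct k).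
rewrite (crossings_emb_set E e_sym walk dist) ?big_filter //.
by apply: edge_cut_filter; apply: top_edges_cover.
Qed.

Definition port_unused k (E : gadget_embedding e k) :=
  (port_u_uses E x p == 0) || (port_v_uses E x p == 0).

Lemma gadget_visits_base (E : gadget_embedding e 0) :
  12 + port_unused E <= \sum_w visits p (E w) + 6.
Proof.
set mu := port_u_uses E x p; set mv := port_v_uses E x p.
pose t i j := traversals x p (E (inZp i), E (inZp j)).
have deg_u : (visits p (E (inZp 0))).*2 = t 0 3 + t 0 5 + mu.
  by rewrite visits_emb crossings_base /base_edges unlock /= !addn0.
have deg_v : (visits p (E (inZp 1))).*2 = t 1 2 + t 1 4 + mv.
  by rewrite visits_emb crossings_base /base_edges unlock /= !addn0.
have cut_u : 1 < t 0 3 + t 0 5 + mv.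
  have := emb_crossings_ge2 E (P := predC1 (term_u 0)) (w := term_v 0) isT.
  by rewrite crossings_base /base_edges unlock /= !addn0.
have cut_v : 1 < t 1 2 + t 1 4 + mu.
  have := emb_crossings_ge2 E (P := predC1 (term_v 0)) (w := term_u 0) isT.
  by rewrite crossings_base /base_edges unlock /= !addn0.
have ports : 1 < mu + mv := port_uses_ge2 E.
have visited i := visits_gt0 (E (inZp i)).
have := gadget_base_arith deg_u cut_u deg_v cut_v ports (visited 0) (visited 1).
rewrite big_ord_inZp /index_iota /= !big_cons big_nil /port_unused -/mu -/mv.
have := visited 2; have := visited 3; have := visited 4; have := visited 5.
lia.
Qed.

Lemma gadget_visits_step k (E : gadget_embedding e k.+1) :
  (forall b, 12 * 2 ^ k + port_unused (sub_embedding E b) <=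
             \sum_w visits p (sub_embedding E b w) + 6) ->
  12 * 2 ^ k.+1 + port_unused E <= \sum_w visits p (E w) + 6.
Proof.
move=> sub_visits.
set mu := port_u_uses E x p; set mv := port_v_uses E x p.
pose t i j := traversals x p (E (inl (inZp i)), E (inl (inZp j))).
pose du b := port_u_uses (sub_embedding E b) x p.
pose dv b := port_v_uses (sub_embedding E b) x p.
pose vis i := visits p (E (inl (inZp i))).
have deg_u : (vis 0).*2 = t 0 1 + t 0 3 + mu.
  by rewrite /vis visits_emb crossings_top // /top_edges unlock /= !addn0 ?addnA.
have deg_v : (vis 1).*2 = t 0 1 + t 1 2 + mv.
  by rewrite /vis visits_emb crossings_top // /top_edges unlock /= !addn0 ?addnA.
have deg_2 : (vis 2).*2 = t 1 2 + du true + du false.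
  by rewrite /vis visits_emb crossings_top // /top_edges unlock /= !addn0 ?addnA.
have deg_3 : (vis 3).*2 = t 0 3 + dv true + dv false.
  by rewrite /vis visits_emb crossings_top // /top_edges unlock /= !addn0 ?addnA.
have cut_mid : 1 < t 0 3 + t 1 2.
  have := emb_crossings_ge2 E
    (P := [pred y | (y != term_u k.+1) && (y != term_v k.+1)]) (w := inl (inZp 2)) isT.
  by rewrite crossings_top // /top_edges unlock /= !addn0.
have cut_u : 1 < t 0 1 + t 1 2 + mu.
  have := emb_crossings_ge2 E (P := predC1 (term_v k.+1)) (w := term_u k.+1) isT.
  by rewrite crossings_top // /top_edges unlock /= !addn0.
have cut_v : 1 < t 0 1 + t 0 3 + mv.
  have := emb_crossings_ge2 E (P := predC1 (term_u k.+1)) (w := term_v k.+1) isT.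
  by rewrite crossings_top // /top_edges unlock /= !addn0.
rewrite sum_gadgetS big_ord_inZp /index_iota /= !big_cons big_nil addn0 !addnA expnS mulnCA mul2n.
exact: gadget_step_arith deg_u deg_v deg_2 deg_3 (visits_gt0 _) (visits_gt0 _) cut_mid cut_u cut_v
  (port_uses_ge2 E) (port_uses_ge2 _) (port_uses_ge2 _) (sub_visits true) (sub_visits false).
Qed.

Lemma gadget_visits k (E : gadget_embedding e k) :
  12 * 2 ^ k + port_unused E <= \sum_w visits p (E w) + 6.
Proof.
elim: k E => [|k IHk] E; first exact: gadget_visits_base.
by apply: gadget_visits_step => b; apply: IHk.
Qed.

End GadgetInTour.

Section PairEmbedding.
Variables (k : nat) (b : bool).

Let side c (w : gadget k) : gadget_pair k := if c then inl w else inr w.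

Lemma side_inj : injective (side b).
Proof. by rewrite /side; case: b => w w' [->]. Qed.

Lemma side_adj w w' : pair_adj (side b w) (side b w') = gadget_adj w w'.
Proof. by rewrite /side; case: b. Qed.

Lemma side_adj_out w z : pair_adj (side b w) z ->
  (exists w', z = side b w') \/ (w = term_u k /\ z = side (~~ b) (term_v k)) \/
  (w = term_v k /\ z = side (~~ b) (term_u k)).
Proof.
rewrite /side; case: b z => -[w'|w'] /=; try by left; exists w'.
all: by rewrite /bridge => /orP[] /andP[/eqP-> /eqP->]; right; [left | right].
Qed.

Lemma side_port_u_out w : side b w != side (~~ b) (term_v k).
Proof. by rewrite /side; case: b. Qed.

Lemma side_port_v_out w : side b w != side (~~ b) (term_u k).
Proof. by rewrite /side; case: b. Qed.

Definition pair_embedding : gadget_embedding (@pair_adj k) k :=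
  GadgetEmbedding side_inj side_adj side_adj_out side_port_u_out side_port_v_out.

End PairEmbedding.

Lemma tour_length_bound k (x : gadget_pair k) p : tsp_tour (@pair_adj k) x p ->
  6 * #|gadget_pair k| <= 5 * size p + 12.
Proof.
move=> tour; have p_nonempty : p != [::].
  apply: contraPneq (proj2 (proj2 tour) (match x with inl w => inr w | inr w => inl w end)) => ->.
  by case: x {tour}.
have visits_side b := gadget_visits (@pair_adj_sym k) (@pair_adj_irr k) tour p_nonempty
  (pair_embedding k b).
have := visits_side true; have := visits_side false.
rewrite -sum_visits big_sumType /= card_sum.
have := card_gadget k; lia.
Qed.

Import Order.TTheory GRing.Theory Num.Theory.
Local Open Scope ring_scope.

Lemma ratio_bound (R : realFieldType) (eps : R) (n L : nat) : 0 < eps ->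
  12 / (5 * eps) < n%:R -> (6 * n <= 5 * L + 12)%N -> (6 / 5 - eps) * n%:R <= L%:R.
Proof.
move=> eps_gt0; rewrite ltr_pdivrMr ?mulr_gt0 // => large.
rewrite -(ler_nat R) natrD !natrM => bound.
lra.
Qed.

Unset Implicit Arguments. Set Strict Implicit. Set Printing Implicit Defensive.

Theorem theorem2 (R : realType) (eps : R) (heps : 0 < eps) :
  exists (T : finType) (e : rel T),
    [/\ simple_graph e, cubic e, bipartite e, connected_graph e &
        (0 < #|T|)%N] /\
        forall (x : T) (p : seq T), tsp_tour e x p ->
          (6 / 5 - eps) * (#|T|%:R) <= (size p)%:R.
Proof.
pose k := Num.Def.archi_bound (12 / (5 * eps)).
have k_large : 12 / (5 * eps) < k%:R.
  by apply: archi_boundP; rewrite divr_ge0 // mulr_ge0 // ltW.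
have card_pair : (#|gadget_pair k| + 8 = 20 * 2 ^ k)%N.
  by rewrite card_sum; have := card_gadget k; lia.
exists (gadget_pair k), (@pair_adj k); split.
  split=> //; [exact: (conj (@pair_adj_sym k) (@pair_adj_irr k)) | exact: pair_adj_cubic
              | exact: pair_adj_bipartite | exact: pair_adj_connected | lia].
move=> x p /tour_length_bound; apply: ratio_bound heps (lt_le_trans k_large _).
by rewrite ler_nat; have := ltn_expl k (isT : (1 < 2)%N); lia.
Qed.
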